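(* Let $d\ge1$, $s\in[0,d]$, and let $E\subset\mathbb R^d$ be a nonempty bounded Borel set with $\varphi^s(E)>0$. Let $\eta\in(0,1)$ and let $\mu_\eta$ be a Borel probability measure with $\mu_\eta(\mathbb R^d\setminus E)=0$ such that \[ \inf_{x\in E}\inf_{r>0}\frac{r^s}{\mu_\eta(B_r(x))}>\varphi^s(E)(1-\eta). \] Let $\varepsilon>0$ and let $A$ be the set of points $x\in E$ such that for all $y\in E$ and $r>0$ with $x\in B_r(y)$ one has $\mu_\eta(B_r(y))<(1-\varepsilon)r^s/\varphi^s(E)$. Then \[ \mathcal H^s_\infty(A)\le \frac{\varphi^s(E)}{c_d\,(1-\varepsilon+\varepsilon/\eta)}. \]
   Context: $B_r(x)$ denotes the open ball in $\mathbb R^d$ of center $x$ and radius $r$. For a Borel set $E\subset\mathbb R^d$ and $s\ge 0$, $\varphi^s(E)=\sup_\mu \inf_{x\in E}\inf_{r>0} r^s/\mu(B_r(x))$, the supremum over Borel probability measures $\mu$ with $\mu(\mathbb R^d\setminus E)=0$. $\mathcal H^s_\infty$ is the $s$-dimensional Hausdorff content (infimum of $\sum(\operatorname{diam}D_i)^s$ over countable covers by balls) and $\mathcal H^s$ the $s$-dimensional Hausdorff measure. $c_d>0$ is a constant depending only on $d$ such that (Frostman's lemma) for every bounded Borel set $K\subset\mathbb R^d$ with $\mathcal H^s(K)>0$ there is a Borel probability measure $m$ with $m(\mathbb R^d\setminus K)=0$ and $m(B_r(x))\le r^s/(c_d\mathcal H^s_\infty(K))$ for all $x\in\mathbb R^d$,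 $r>0$. *)

From Stdlib Require Import Reals Lra.
Open Scope R_scope.

(* Points of R^d: real sequences vanishing from index d on. *)
Definition pt (d : nat) : Type := {x : nat -> R | forall i, (d <= i)%nat -> x i = 0}.

Fixpoint sumsq (n : nat) (x y : nat -> R) : R :=
  match n with
  | O => 0
  | S k => sumsq k x y + (x k - y k) ^ 2
  end.

Definition dist {d : nat} (x y : pt d) : R :=
  sqrt (sumsq d (proj1_sig x) (proj1_sig y)).

Definition set (d : nat) := pt d -> Prop.

Definition ball {d : nat} (x : pt d) (r : R) : set d := fun y => dist x y < r.

Definition setC {d : nat} (A : set d) : set d := fun x => ~ A x.

Definition is_open {d : nat} (U : set d) : Prop :=
  forall x, U x -> exists e, 0 < e /\ forall y, dist x y < e -> U y.

Inductive borel {d : nat} : set d -> Prop :=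
  | borel_open : forall U, is_open U -> borel U
  | borel_compl : forall A, borel A -> borel (setC A)
  | borel_union : forall A : nat -> set d, (forall n, borel (A n)) ->
      borel (fun x => exists n, A n x).

Definition bdd_set {d : nat} (E : set d) : Prop :=
  exists x0 R0, forall x, E x -> dist x0 x <= R0.

(* Borel probability measure (values on non-Borel sets are irrelevant) *)
Definition prob_measure {d : nat} (mu : set d -> R) : Prop :=
  (forall A, borel A -> 0 <= mu A) /\
  mu (fun _ => True) = 1 /\
  (forall A : nat -> set d, (forall n, borel (A n)) ->
     (forall m n x, m <> n -> A m x -> A n x -> False) ->
     infinite_sum (fun n => mu (A n)) (mu (fun x => exists n, A n x))).

(* c is a lower bound of { r^s / mu(B_r(x)) : x in E, r > 0 }
   (with the convention r^s/0 = +infinity) *)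
Definition ratio_lowb {d : nat} (s : R) (E : set d) (mu : set d -> R) (c : R) : Prop :=
  forall x r, E x -> 0 < r -> c * mu (ball x r) <= Rpower r s.

(* q = inf_{x in E} inf_{r>0} r^s / mu(B_r(x)) *)
Definition ratio_inf {d : nat} (s : R) (E : set d) (mu : set d -> R) (q : R) : Prop :=
  is_lub (ratio_lowb s E mu) q.

(* p = phi^s(E) = sup over Borel probability measures on E of ratio_inf *)
Definition is_phi {d : nat} (s : R) (E : set d) (p : R) : Prop :=
  is_lub (fun q => exists mu, prob_measure mu /\ mu (setC E) = 0 /\ ratio_inf s E mu q) p.

Definition is_glb (S : R -> Prop) (m : R) : Prop :=
  (forall v, S v -> m <= v) /\ (forall m', (forall v, S v -> m' <= v) -> m' <= m).

(* (diam B_r(x))^s = (2r)^s, with diam(empty)^s = 0 for r = 0 *)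
Definition contrib (s r : R) : R := if Rle_dec r 0 then 0 else Rpower (2 * r) s.

Definition cover_val {d : nat} (s delta : R) (A : set d) (v : R) : Prop :=
  exists (c : nat -> pt d) (r : nat -> R),
    (forall n, 0 <= r n /\ 2 * r n <= delta) /\
    (forall x, A x -> exists n, ball (c n) (r n) x) /\
    infinite_sum (fun n => contrib s (r n)) v.

Definition cover_val_inf {d : nat} (s : R) (A : set d) (v : R) : Prop :=
  exists (c : nat -> pt d) (r : nat -> R),
    (forall n, 0 <= r n) /\
    (forall x, A x -> exists n, ball (c n) (r n) x) /\
    infinite_sum (fun n => contrib s (r n)) v.

Definition is_Hcontent {d : nat} (s : R) (A : set d) (h : R) : Prop :=
  is_glb (cover_val_inf s A) h.

(* H^s(A) > 0, i.e. H^s_delta(A) > 0 for some delta > 0 *)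
Definition Hmeas_pos {d : nat} (s : R) (A : set d) : Prop :=
  exists delta e, 0 < delta /\ 0 < e /\ forall v, cover_val s delta A v -> e <= v.

Definition frostman_const (d : nat) (c : R) : Prop :=
  forall (s : R) (K : set d), 0 <= s <= INR d -> borel K -> bdd_set K -> Hmeas_pos s K ->
    forall h, is_Hcontent s K h ->
      exists m : set d -> R, prob_measure m /\ m (setC K) = 0 /\
        forall x r, 0 < r -> m (ball x r) <= Rpower r s / (c * h).

(* Suppose H^s_oo(A) = h exceeds the bound. The set A is Borel, so Frostman's
   lemma gives a probability measure m on A with m(B_r(x)) <= r^s / (c_d h), and
   we mix it into nu = (1 - eta) mu_eta + eta m. A ball centred in E is either
   light for mu_eta (mu_eta(B) < (1 - eps) r^s / phi), and then the Frostman
   bound controls m(B), or it is heavy, and then it misses A, so m(B) = 0 and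
   only the (1 - eta) mu_eta part counts. In both cases
   phi^s(E) nu(B) <= beta r^s for a fixed beta < 1, so nu witnesses a value
   phi^s(E) / beta > phi^s(E) in the supremum defining phi^s(E). *)

From Pilot Require Import Defs.
From Stdlib Require Import Reals Lra Psatz Classical FunctionalExtensionality PropExtensionality.
Open Scope R_scope.

Lemma sumsq_ge0 n x y : 0 <= sumsq n x y.
Proof. induction n; simpl; [lra | pose proof (pow2_ge_0 (x n - y n)); lra]. Qed.

Lemma sumsq_sym n x y : sumsq n x y = sumsq n y x.
Proof. induction n; simpl; [reflexivity | rewrite IHn; ring]. Qed.

(* Minkowski's inequality, by induction on the number of coordinates: adding one
   coordinate is the triangle inequality in the plane for (|u|, a) and (|v|, b). *)
Lemma sqrt_sumsq_triangle n x y z :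
  sqrt (sumsq n x y) <= sqrt (sumsq n x z) + sqrt (sumsq n z y).
Proof.
  induction n as [|n IH]; simpl.
  - rewrite sqrt_0; lra.
  - pose proof (sumsq_ge0 n x y); pose proof (sumsq_ge0 n x z);
      pose proof (sumsq_ge0 n z y).
    set (S := sumsq n x y) in *; set (Sa := sumsq n x z) in *;
      set (Sb := sumsq n z y) in *.
    set (a := x n - z n); set (b := z n - y n).
    replace (x n - y n) with (a + b) by (unfold a, b; ring).
    set (u := sqrt Sa) in *; set (v := sqrt Sb) in *.
    assert (Hu : 0 <= u) by apply sqrt_pos.
    assert (Hv : 0 <= v) by apply sqrt_pos.
    assert (Hu2 : u * u = Sa) by (apply sqrt_sqrt; lra).
    assert (Hv2 : v * v = Sb) by (apply sqrt_sqrt; lra).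
    assert (HS : S <= (u + v) * (u + v)).
    { assert (HS2 : sqrt S * sqrt S = S) by (apply sqrt_sqrt; lra).
      pose proof (sqrt_pos S); nra. }
    set (P := sqrt (Sa + a ^ 2)); set (Q := sqrt (Sb + b ^ 2)).
    assert (HP : 0 <= P) by apply sqrt_pos.
    assert (HQ : 0 <= Q) by apply sqrt_pos.
    assert (HP2 : P * P = Sa + a ^ 2) by (apply sqrt_sqrt; nra).
    assert (HQ2 : Q * Q = Sb + b ^ 2) by (apply sqrt_sqrt; nra).
    assert (Hcs : u * v + a * b <= P * Q).
    { assert ((u * v + a * b) * (u * v + a * b) <= (P * Q) * (P * Q)).
      { replace ((P * Q) * (P * Q)) with ((P * P) * (Q * Q)) by ring.
        rewrite HP2, HQ2, <- Hu2, <- Hv2.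
        pose proof (pow2_ge_0 (u * b - a * v)); nra. }
      assert (0 <= P * Q) by nra.
      nra. }
    replace ((a + b) * ((a + b) * 1)) with ((a + b) ^ 2) by ring.
    replace (a * (a * 1)) with (a ^ 2) by ring.
    replace (b * (b * 1)) with (b ^ 2) by ring.
    fold P Q.
    apply Rle_trans with (sqrt ((P + Q) * (P + Q))).
    + apply sqrt_le_1_alt; nra.
    + rewrite sqrt_square by lra; lra.
Qed.

Lemma dist_sym {d} (x y : pt d) : Defs.dist x y = Defs.dist y x.
Proof. unfold Defs.dist; rewrite sumsq_sym; reflexivity. Qed.

Lemma dist_ge0 {d} (x y : pt d) : 0 <= Defs.dist x y.
Proof. apply sqrt_pos. Qed.

Lemma dist_triangle {d} (x y z : pt d) : Defs.dist x y <= Defs.dist x z + Defs.dist z y.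
Proof. apply sqrt_sumsq_triangle. Qed.

Lemma ball_open {d} (x : pt d) r : is_open (ball x r).
Proof.
  intros z Hz; exists (r - Defs.dist x z); split; [unfold ball in Hz; lra|].
  intros w Hw; unfold ball; pose proof (dist_triangle x w z); lra.
Qed.

Lemma bdd_set_sub_ball {d} (E : set d) x1 :
  bdd_set E -> E x1 -> exists R1, 0 < R1 /\ forall y, E y -> ball x1 R1 y.
Proof.
  intros [x0 [R0 HR0]] Hx1.
  pose proof (HR0 x1 Hx1); pose proof (dist_ge0 x0 x1).
  exists (2 * R0 + 1); split; [lra|].
  intros y Hy; unfold ball.
  pose proof (dist_triangle x1 y x0); rewrite (dist_sym x1 x0) in *.
  pose proof (HR0 y Hy); lra.
Qed.

Lemma set_ext {d} (A B : set d) : (forall x, A x <-> B x) -> A = B.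
Proof.
  intro H; apply functional_extensionality; intro x.
  apply propositional_extensionality; auto.
Qed.

Lemma borel_ext {d} (A B : set d) : borel A -> (forall x, A x <-> B x) -> borel B.
Proof. intros HA H; rewrite <- (set_ext A B H); exact HA. Qed.

Lemma borel_ball {d} (x : pt d) r : borel (ball x r).
Proof. apply borel_open, ball_open. Qed.

Lemma borel_empty {d} : borel (fun _ : pt d => False).
Proof. apply borel_open; intros x []. Qed.

Lemma borel_union2 {d} (A B : set d) : borel A -> borel B -> borel (fun x => A x \/ B x).
Proof.
  intros HA HB.
  apply borel_ext with (fun x => exists n, (match n with O => A | _ => B end) x).
  - apply borel_union; intros [|n]; auto.
  - intro x; split.
    + intros [[|n] H]; auto.
    + intros [H|H]; [exists O | exists 1%nat]; auto.
Qed.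

Lemma borel_inter {d} (A B : set d) : borel A -> borel B -> borel (fun x => A x /\ B x).
Proof.
  intros HA HB.
  apply borel_ext with (setC (fun x => setC A x \/ setC B x)).
  - apply borel_compl, borel_union2; apply borel_compl; auto.
  - intro x; unfold setC; split.
    + intro H; split; apply NNPP; intro; apply H; auto.
    + intros [H1 H2] [H|H]; auto.
Qed.

(* The points violating the constraint form a union of open balls. *)
Lemma borel_ball_constrained {d} (E : set d) (G : pt d -> R -> Prop) :
  borel E -> borel (fun x => E x /\ forall y r, ball y r x -> G y r).
Proof.
  intro HE.
  set (U := fun x => exists y r, ball y r x /\ ~ G y r).
  apply borel_ext with (fun x => E x /\ setC U x).
  - apply borel_inter, borel_compl, borel_open; auto.
    intros z [y [r [Hz HG]]].
    destruct (ball_open y r z Hz) as [e [He Hball]].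
    exists e; split; auto; intros w Hw; exists y, r; auto.
  - intro x; unfold U, setC; split.
    + intros [Hx HnU]; split; auto; intros y r Hb.
      apply NNPP; intro HG; apply HnU; exists y, r; auto.
    + intros [Hx HG]; split; auto; intros [y [r [Hb HnG]]]; auto.
Qed.

Lemma cv_const (a : R) : Un_cv (fun _ => a) a.
Proof.
  intros e He; exists O; intros; rewrite Rdist_eq; lra.
Qed.

(* The partial sums of a convergent series have increments tending to 0. *)
Lemma infinite_sum_const_eq0 c l : infinite_sum (fun _ => c) l -> c = 0.
Proof.
  intro H.
  apply UL_sequence with (fun _ : nat => c); [apply cv_const|].
  replace 0 with (l - l) by ring.
  apply Un_cv_ext with (fun n => sum_f_R0 (fun _ => c) (n + 1) - sum_f_R0 (fun _ => c) n).
  - intro n; rewrite Nat.add_1_r, tech5; ring.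
  - apply CV_minus; [apply CV_shift'|]; exact H.
Qed.

Lemma infinite_sum_eventually (F : nat -> R) (L : R) (N : nat) :
  (forall n, (n >= N)%nat -> sum_f_R0 F n = L) -> infinite_sum F L.
Proof.
  intros H e He; exists N; intros n Hn; rewrite H by exact Hn.
  rewrite Rdist_eq; lra.
Qed.

Section ProbMeasure.
Context {d : nat} (mu : set d -> R) (Hmu : prob_measure mu).

Lemma measure_ext (A B : set d) : (forall x, A x <-> B x) -> mu A = mu B.
Proof. intro H; rewrite (set_ext A B H); reflexivity. Qed.

Lemma measure_ge0 (A : set d) : borel A -> 0 <= mu A.
Proof. apply Hmu. Qed.

Lemma measure_empty : mu (fun _ => False) = 0.
Proof.
  destruct Hmu as [_ [_ Hadd]].
  specialize (Hadd (fun _ _ => False) (fun _ => borel_empty) (fun _ _ _ _ H _ => H)).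
  rewrite (measure_ext _ (fun _ => False)) in Hadd by firstorder.
  exact (infinite_sum_const_eq0 _ _ Hadd).
Qed.

Lemma measure_add2 (A B : set d) : borel A -> borel B -> (forall x, A x -> B x -> False) ->
  mu (fun x => A x \/ B x) = mu A + mu B.
Proof.
  intros HA HB Hdis.
  destruct Hmu as [_ [_ Hadd]].
  set (F := fun n : nat => match n with O => A | 1%nat => B | _ => fun _ => False end).
  assert (HF : forall n, borel (F n)) by (intros [|[|n]]; simpl; auto using borel_empty).
  assert (HD : forall m n x, m <> n -> F m x -> F n x -> False).
  { intros [|[|m]] [|[|n]] x Hmn; simpl; try tauto; try (intros; eauto); lia. }
  specialize (Hadd F HF HD).
  rewrite (measure_ext _ (fun x => A x \/ B x)) in Hadd.
  2:{ intro x; split.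
      - intros [[|[|n]] H]; simpl in H; tauto.
      - intros [H|H]; [exists O | exists 1%nat]; auto. }
  apply (uniqueness_sum _ _ _ Hadd), infinite_sum_eventually with 1%nat.
  intros n Hn; induction n as [|n IH]; [lia|].
  destruct n as [|n].
  - simpl; ring.
  - rewrite tech5, IH by lia; simpl; rewrite measure_empty; ring.
Qed.

Lemma measure_le (A B : set d) : borel A -> borel B -> (forall x, A x -> B x) ->
  mu A <= mu B.
Proof.
  intros HA HB Hsub.
  assert (HBA : borel (fun x => B x /\ setC A x)) by (apply borel_inter, borel_compl; auto).
  rewrite (measure_ext B (fun x => A x \/ (B x /\ setC A x))).
  2:{ intro x; split; [|intros [H|[H _]]; auto].
      intro H; destruct (classic (A x)); [left | right]; auto. }
  rewrite measure_add2; auto.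
  - pose proof (measure_ge0 _ HBA); lra.
  - intros x H [_ H']; auto.
Qed.

Lemma measure_null_sub (A B : set d) : borel A -> borel B -> (forall x, A x -> B x) ->
  mu B = 0 -> mu A = 0.
Proof.
  intros HA HB Hsub HB0.
  pose proof (measure_le A B HA HB Hsub); pose proof (measure_ge0 A HA); lra.
Qed.

Lemma measure_full_sup (E B : set d) : borel E -> borel B -> (forall x, E x -> B x) ->
  mu (setC E) = 0 -> mu B = 1.
Proof.
  intros HE HB Hsub HE0.
  assert (HBc : mu (setC B) = 0).
  { apply measure_null_sub with (setC E); try apply borel_compl; auto.
    intros x HnB HEx; apply HnB, Hsub, HEx. }
  rewrite <- (proj1 (proj2 Hmu)), (measure_ext (fun _ => True) (fun x => B x \/ setC B x)).
  - rewrite measure_add2; auto using borel_compl; lra.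
  - intro x; split; [intros _; apply classic | auto].
Qed.

End ProbMeasure.

Definition mix {d} (eta : R) (mu m : set d -> R) : set d -> R :=
  fun S => (1 - eta) * mu S + eta * m S.

Lemma infinite_sum_mix (eta : R) F G l1 l2 : infinite_sum F l1 -> infinite_sum G l2 ->
  infinite_sum (fun n => (1 - eta) * F n + eta * G n) ((1 - eta) * l1 + eta * l2).
Proof.
  intros H1 H2.
  apply Un_cv_ext with (fun n => (1 - eta) * sum_f_R0 F n + eta * sum_f_R0 G n).
  - induction n; simpl; [|rewrite <- IHn]; ring.
  - apply CV_plus; apply CV_mult; auto using cv_const.
Qed.

Lemma prob_measure_mix {d} (eta : R) (mu m : set d -> R) :
  prob_measure mu -> prob_measure m -> 0 <= eta <= 1 -> prob_measure (mix eta mu m).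
Proof.
  intros [H0 [H1 Hadd]] [K0 [K1 Kadd]] Heta; unfold mix; split; [|split].
  - intros A HA; specialize (H0 A HA); specialize (K0 A HA); nra.
  - rewrite H1, K1; ring.
  - intros A HA HD; apply infinite_sum_mix; auto.
Qed.

Lemma Rpower_gt0 r s : 0 < Rpower r s.
Proof. apply exp_pos. Qed.

Lemma ratio_inf_lowb {d} s (E : set d) mu q :
  prob_measure mu -> ratio_inf s E mu q -> ratio_lowb s E mu q.
Proof.
  intros Hmu [_ Hleast] x r Hx Hr.
  pose proof (Rpower_gt0 r s).
  destruct (measure_ge0 mu Hmu _ (borel_ball x r)) as [HM|HM]; [|rewrite <- HM; lra].
  assert (Hq : q <= Rpower r s / mu (ball x r)).
  { apply Hleast; intros c' Hc'; specialize (Hc' x r Hx Hr).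
    apply Rmult_le_reg_r with (mu (ball x r)); [lra|].
    unfold Rdiv; rewrite Rmult_assoc, Rinv_l; lra. }
  apply Rmult_le_compat_r with (r := mu (ball x r)) in Hq; [|lra].
  unfold Rdiv in Hq; rewrite Rmult_assoc, Rinv_l in Hq; lra.
Qed.

(* The ratios are bounded above at a ball containing E, which has full mass, so
   their infimum exists and competes in the supremum defining phi^s(E). *)
Lemma ratio_lowb_le_phi {d} s (E : set d) p nu c :
  is_phi s E p -> borel E -> (exists x, E x) -> bdd_set E ->
  prob_measure nu -> nu (setC E) = 0 -> ratio_lowb s E nu c -> c <= p.
Proof.
  intros Hphi HE [x1 Hx1] HbE Hnu HnuE Hlow.
  destruct (bdd_set_sub_ball E x1 HbE Hx1) as [R1 [HR1 Hsub]].
  assert (Hfull : nu (ball x1 R1) = 1)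
    by (apply measure_full_sup with E; auto using borel_ball).
  assert (Hbound : bound (ratio_lowb s E nu)).
  { exists (Rpower R1 s); intros c' Hc'.
    specialize (Hc' x1 R1 Hx1 HR1); rewrite Hfull in Hc'; lra. }
  destruct (completeness _ Hbound (ex_intro _ _ Hlow)) as [Q HQ].
  apply Rle_trans with Q; [apply (proj1 HQ), Hlow|].
  apply (proj1 Hphi); exists nu; auto.
Qed.

Lemma Hmeas_pos_of_Hcontent {d} s (A : set d) h :
  is_Hcontent s A h -> 0 < h -> Hmeas_pos s A.
Proof.
  intros [Hlow _] Hh; exists 1, h; split; [lra|]; split; [lra|].
  intros v [cc [rr [Hr [Hcov Hsum]]]].
  apply Hlow; exists cc, rr; repeat split; auto; intro n; apply Hr.
Qed.

Lemma mix_ratio_lowb {d} s (E : set d) (mu m : set d -> R) (eta q t a : R) :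
  0 <= eta < 1 -> 0 < q -> ratio_lowb s E mu q ->
  (forall x r, 0 < r -> m (ball x r) <= a * Rpower r s) ->
  (forall x r, E x -> 0 < r -> t * Rpower r s <= mu (ball x r) -> m (ball x r) = 0) ->
  ratio_lowb s E (mix eta mu m) (/ Rmax ((1 - eta) / q) ((1 - eta) * t + eta * a)).
Proof.
  intros Heta Hq Hlow Hbound Hheavy x r Hx Hr.
  set (b := Rmax ((1 - eta) / q) ((1 - eta) * t + eta * a)).
  set (R0 := Rpower r s); set (M := mu (ball x r)); set (Mm := m (ball x r)).
  assert (HR0 : 0 < R0) by apply Rpower_gt0.
  assert (Hq' : (1 - eta) / q * q = 1 - eta) by (field; lra).
  assert (Hb1 : (1 - eta) / q <= b) by apply Rmax_l.
  assert (Hb2 : (1 - eta) * t + eta * a <= b) by apply Rmax_r.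
  assert (Hb : 0 < b) by (pose proof (Rdiv_lt_0_compat (1 - eta) q ltac:(lra) Hq); lra).
  assert (Hmix : (1 - eta) * M + eta * Mm <= b * R0).
  { destruct (Rlt_dec M (t * R0)) as [Hlight|Hheavy'].
    - assert (Mm <= a * R0) by (apply Hbound; exact Hr).
      nra.
    - assert (HMm : Mm = 0) by (apply Hheavy; [exact Hx | exact Hr | apply Rnot_lt_le, Hheavy']).
      assert (q * M <= R0) by (apply Hlow; auto).
      assert (0 <= (1 - eta) / q) by (apply Rlt_le, Rdiv_lt_0_compat; lra).
      rewrite HMm, <- Hq'; nra. }
  unfold mix; fold M Mm.
  apply Rmult_le_reg_l with b; [exact Hb|].
  rewrite <- Rmult_assoc, Rinv_r; lra.
Qed.

Lemma exponent_bound_pos eta eps : 0 < eta < 1 -> 0 < eps -> 0 < 1 - eps + eps / eta.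
Proof.
  intros Heta Heps.
  apply Rmult_lt_reg_l with eta; [lra|].
  replace (eta * (1 - eps + eps / eta)) with (eta + (1 - eta) * eps) by (field; lra).
  nra.
Qed.

Lemma phi_lt_mix_ratio_lowb p q c h eta eps :
  0 < p -> 0 < c -> 0 < eta < 1 -> 0 < eps -> p * (1 - eta) < q ->
  p / (c * (1 - eps + eps / eta)) < h ->
  p < / Rmax ((1 - eta) / q) ((1 - eta) * ((1 - eps) / p) + eta * / (c * h)).
Proof.
  intros Hp Hc Heta Heps Hq Hh.
  set (K := 1 - eps + eps / eta).
  assert (HK : eta * K = eta + (1 - eta) * eps) by (unfold K; field; lra).
  assert (HK0 : 0 < K) by (apply exponent_bound_pos; assumption).
  assert (Hh' : p < c * K * h).
  { replace p with (c * K * (p / (c * K))) at 1 by (field; lra).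
    apply Rmult_lt_compat_l; [nra | exact Hh]. }
  assert (Hq0 : 0 < q) by nra.
  assert (HcK : 0 < c * K) by nra.
  assert (Hh0 : 0 < h) by (apply (Rmult_lt_reg_l (c * K)); [exact HcK | lra]).
  set (b := Rmax ((1 - eta) / q) ((1 - eta) * ((1 - eps) / p) + eta * / (c * h))).
  assert (Hb : 0 < b).
  { eapply Rlt_le_trans; [|apply Rmax_l]; apply Rdiv_lt_0_compat; lra. }
  assert (Hpb : p * b < 1).
  { unfold b, Rmax; destruct Rle_dec; [clear r|].
    - replace (p * ((1 - eta) * ((1 - eps) / p) + eta * / (c * h)))
        with ((1 - eta) * (1 - eps) + eta * (p / (c * h))) by (field; repeat split; lra).
      assert (p / (c * h) < K).
      { apply Rmult_lt_reg_r with (c * h); [nra|].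
        replace (p / (c * h) * (c * h)) with p by (field; split; lra); nra. }
      nra.
    - apply Rmult_lt_reg_r with q; [exact Hq0|].
      replace (p * ((1 - eta) / q) * q) with (p * (1 - eta)) by (field; lra); lra. }
  apply Rmult_lt_reg_r with b; [exact Hb|].
  rewrite Rinv_l; lra.
Qed.

Theorem lemma2p2 (d : nat) (s : R) (E : set d) (c p eta eps : R) (mu : set d -> R) :
  (1 <= d)%nat -> 0 <= s <= INR d ->
  borel E -> (exists x, E x) -> bdd_set E ->
  0 < c -> frostman_const d c ->
  is_phi s E p -> 0 < p ->
  0 < eta < 1 ->
  prob_measure mu -> mu (setC E) = 0 ->
  (exists q, ratio_inf s E mu q /\ p * (1 - eta) < q) ->
  0 < eps ->
  forall h, is_Hcontent s
    (fun x => E x /\ forall y r, E y -> 0 < r -> ball y r x ->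
        mu (ball y r) < (1 - eps) * Rpower r s / p) h ->
  h <= p / (c * (1 - eps + eps / eta)).
Proof.
  intros _ Hs HE HEne HbE Hc Hfr Hphi Hp Heta Hmu HmuE [q [Hq Hpq]] Heps h Hh.
  set (A := fun x => E x /\ forall y r, E y -> 0 < r -> ball y r x ->
        mu (ball y r) < (1 - eps) * Rpower r s / p) in Hh.
  apply Rnot_lt_le; intro Hgt.
  assert (Hh0 : 0 < h).
  { apply Rle_lt_trans with (2 := Hgt), Rlt_le, Rdiv_lt_0_compat; [exact Hp|].
    apply Rmult_lt_0_compat; [exact Hc | apply exponent_bound_pos; assumption]. }
  assert (HA : borel A).
  { apply borel_ext with (fun x => E x /\ forall y r, ball y r x ->
        E y -> 0 < r -> mu (ball y r) < (1 - eps) * Rpower r s / p).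
    - apply borel_ball_constrained, HE.
    - intro x; split; intros [Hx Hball]; split; auto. }
  assert (HbA : bdd_set A)
    by (destruct HbE as [x0 [R0 HR0]]; exists x0, R0; intros x [Hx _]; auto).
  destruct (Hfr s A Hs HA HbA (Hmeas_pos_of_Hcontent s A h Hh Hh0) h Hh)
    as [m [Hm [HmA Hmb]]].
  assert (HmE : m (setC E) = 0).
  { apply (measure_null_sub m Hm) with (setC A); try apply borel_compl; auto.
    intros x HnE [HEx _]; auto. }
  apply (Rlt_irrefl p); eapply Rlt_le_trans;
    [exact (phi_lt_mix_ratio_lowb p q c h eta eps Hp Hc Heta Heps Hpq Hgt)|].
  apply (ratio_lowb_le_phi s E p (mix eta mu m)); [exact Hphi | exact HE | exact HEne
    | exact HbE | | |].
  - apply prob_measure_mix; auto; lra.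
  - unfold mix; rewrite HmuE, HmE; ring.
  - apply mix_ratio_lowb; [lra | nra | apply ratio_inf_lowb; auto | |].
    + intros x r Hr; specialize (Hmb x r Hr); unfold Rdiv in Hmb; lra.
    + intros x r Hx Hr Hheavy.
      apply (measure_null_sub m Hm) with (setC A); auto using borel_ball, borel_compl.
      intros z Hz [_ HAz]; specialize (HAz x r Hx Hr Hz).
      unfold Rdiv in *; lra.
Qed.
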